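(* Let $A\in\mathbb{Q}_Q(\mathbb{R}^n)$ with signature $S(A)=(J,k_1,\dots,k_J)$. Then the tangent cone $\mathbf{Tan}_A(\mathbb{Q}_Q(\mathbb{R}^n))$ is isometric to the product $\mathbb{Q}_{k_1}(\mathbb{R}^n)\times\mathbb{Q}_{k_2}(\mathbb{R}^n)\times\dots\times\mathbb{Q}_{k_J}(\mathbb{R}^n)$ equipped with the product metric $d\big((X_i)_i,(Y_i)_i\big)=\big(\sum_{i=1}^J\mathcal{G}^2(X_i,Y_i)\big)^{1/2}$.
   Context: $\mathbb{Q}_Q(\mathbb{R}^n)$ denotes the set of unordered $Q$-tuples of points of $\mathbb{R}^n$, written $\sum_{i=1}^Q[[a_i]]$ (two such sums are equal iff the tuples agree up to a permutation; $k[[a]]$ means $k$ copies of $a$), with metric $\mathcal{G}\big(\sum_i[[a_i]],\sum_i[[b_i]]\big)=\min_{\sigma}\big(\sum_{i}|a_i-b_{\sigma(i)}|^2\big)^{1/2}$ over permutations $\sigma$. Signature: every $x$ can be written uniquely as $x=\sum_{i=1}^J k_i[[x_i]]$ with $x_1,\dots,x_J$ distinct and $1\le k_1\le\dots\le k_J$; $S(x):=(J,k_1,\dots,k_J)$. Tangent cone: let $G(A)$ be the set of geodesics issuing from $A$, i.e. curves $\gamma:[0,T_\gamma]\to\mathbb{Q}_Q(\mathbb{R}^n)$ with $\gamma(0)=A$ and $\mathcal{G}(\gamma(s),\gamma(t))=c|t-s|$ for a constant $c\ge0$. For $\gamma_1,\gamma_2\in G(A)$, $d_A(\gamma_1,\gamma_2)=\lim_{t\downarrow0}\mathcal{G}(\gamma_1(t),\gamma_2(t))/t$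 (this limit exists and equals the distance defined via Alexandrov angles). Set $\gamma_1\sim\gamma_2$ if they coincide on some $[0,\epsilon]$, $\epsilon>0$; $d_A$ is a distance on $G(A)/\sim$, and $\mathbf{Tan}_A(\mathbb{Q}_Q(\mathbb{R}^n))$ is the metric completion of $(G(A)/\sim,d_A)$. *)

From HB Require Import structures.
From mathcomp Require Import all_boot all_order all_algebra all_fingroup.
From mathcomp Require Import all_classical all_reals all_analysis.
Set Implicit Arguments. Unset Strict Implicit. Unset Printing Implicit Defensive.
Import Order.TTheory GRing.Theory Num.Theory numFieldNormedType.Exports.
Local Open Scope classical_set_scope.
Local Open Scope ring_scope.

(* Representatives of Q-points: ordered Q-tuples of points of R^n
   (points of R^n are row vectors 'rV[R]_n). Two representatives denote the
   same unordered Q-tuple iff they differ by a permutation, iff their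
   G-distance is 0. *)
Definition Qpt (R : realType) (Q n : nat) := 'I_Q -> 'rV[R]_n.

Definition Gcost (R : realType) (Q n : nat) (a b : Qpt R Q n) (s : {perm 'I_Q}) : R :=
  \sum_(i < Q) \sum_(j < n) (a i 0 j - b (s i) 0 j) ^+ 2.

Definition Gdist (R : realType) (Q n : nat) (a b : Qpt R Q n) : R :=
  Num.sqrt (\big[Num.min/Gcost a b 1%g]_(s : {perm 'I_Q}) Gcost a b s).

Definition is_signature (R : realType) (Q n : nat) (A : Qpt R Q n)
    (J : nat) (k : 'I_J -> nat) : Prop :=
  exists x : 'I_J -> 'rV[R]_n,
    [/\ injective x,
        (forall i, (0 < k i)%N),
        (forall i j : 'I_J, (i <= j)%N -> (k i <= k j)%N),
        (forall l : 'I_Q, exists i, A l = x i) &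
        (forall i, #|[set l : 'I_Q | A l == x i]| = k i)].

(* geodesics issuing from A: gamma : [0,T] -> Q_Q(R^n), gamma(0) = A,
   G(gamma s, gamma t) = c |t - s|.  The curve is a total function on R;
   only its values on [0,T] matter. *)
Record geodesic (R : realType) (Q n : nat) (A : Qpt R Q n) := Geodesic {
  gT : R;
  gcurve : R -> Qpt R Q n;
  gT_gt0 : 0 < gT;
  gcurve0 : Gdist (gcurve 0) A = 0;
  gspeed : exists c : R, 0 <= c /\
     forall s t, 0 <= s <= gT -> 0 <= t <= gT ->
       Gdist (gcurve s) (gcurve t) = c * `|t - s| }.

Definition dA (R : realType) (Q n : nat) (A : Qpt R Q n) (g1 g2 : geodesic A) : R :=
  lim ((fun t : R => Gdist (gcurve g1 t) (gcurve g2 t) / t) @ 0^'+).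

Definition dA_cauchy (R : realType) (Q n : nat) (A : Qpt R Q n)
    (s : nat -> geodesic A) : Prop :=
  forall e : R, 0 < e -> exists N : nat, forall p q : nat, (N <= p)%N -> (N <= q)%N ->
    dA (s p) (s q) < e.

Definition prodQ (R : realType) (n J : nat) (k : 'I_J -> nat) :=
  forall i : 'I_J, Qpt R (k i) n.

Definition prod_dist (R : realType) (n J : nat) (k : 'I_J -> nat)
    (X Y : prodQ R n k) : R :=
  Num.sqrt (\sum_(i < J) (Gdist (X i) (Y i)) ^+ 2).

From HB Require Import structures.
From mathcomp Require Import all_boot all_order all_algebra all_fingroup.
From mathcomp Require Import all_classical all_reals all_analysis.
From mathcomp Require Import ring lra.
Import Order.TTheory GRing.Theory Num.Theory numFieldNormedType.Exports.
Set Implicit Arguments. Unset Strict Implicit. Unset Printing Implicit Defensive.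
Local Open Scope classical_set_scope.
Local Open Scope ring_scope.

(* Near [A], an optimal matching between [A + u] and [A + w] never moves a
   point of [A] (that would cost about the squared gap between distinct points
   of [A]), so there [G] is the distance [d_S] of the stabiliser [S] of [A]
   acting on the displacements [u], [w].  By the equality case of the triangle
   inequality through [A], a geodesic from [A] is a ray [t |-> A + t V] for
   small [t], so [d_A] is [d_S] between directions, and every [V] is a
   direction.  The space of directions with [d_S] is complete, and since [S] is
   the product of the symmetric groups of the clusters of [A], grouping the
   coordinates of [V] by cluster is an isometry onto
   [Q_{k_1} x ... x Q_{k_J}]. *)

Section SumsOfSquares.
Variables (R : rcfType) (I : finType).
Implicit Types (F G : I -> R).

Lemma sum_sqr_ge0 F : 0 <= \sum_i F i ^+ 2.
Proof. by apply: sumr_ge0 => i _; apply: sqr_ge0. Qed.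

Lemma sum_sqr_eq0 F : \sum_i F i ^+ 2 = 0 -> forall i, F i = 0.
Proof.
move=> F0 i; apply/eqP; rewrite -sqrf_eq0; apply/eqP.
by apply: (psumr_eq0P _ F0) => // j _; apply: sqr_ge0.
Qed.

Lemma sum_ge_term F i : (forall j, 0 <= F j) -> F i <= \sum_j F j.
Proof. by move=> F0; rewrite (bigD1 i) //= lerDl sumr_ge0. Qed.

Lemma sum_sqrB_le F G :
  \sum_i (F i - G i) ^+ 2 <= 2 * \sum_i F i ^+ 2 + 2 * \sum_i G i ^+ 2.
Proof.
rewrite !mulr_sumr -big_split /=; apply: ler_sum => i _.
by have := sqr_ge0 (F i + G i); nra.
Qed.

Lemma sum_sqrDB_ge D F G :
  (\sum_i D i ^+ 2) / 2 - 2 * \sum_i F i ^+ 2 - 2 * \sum_i G i ^+ 2 <=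
  \sum_i (D i + (F i - G i)) ^+ 2.
Proof.
rewrite mulr_suml !mulr_sumr -!sumrB; apply: ler_sum => i _.
have := sqr_ge0 (D i + 2 * (F i - G i)); have := sqr_ge0 (F i + G i); nra.
Qed.

Lemma sum_sqr_combE F G a b :
  \sum_i (a * F i - b * G i) ^+ 2 =
  a ^+ 2 * \sum_i F i ^+ 2 + b ^+ 2 * \sum_i G i ^+ 2
  - 2 * a * b * \sum_i F i * G i.
Proof.
rewrite !mulr_sumr -!big_split -sumrB /=.
by apply: eq_bigr => i _; ring.
Qed.

Lemma sum_mul_le_sqrt F G :
  \sum_i F i * G i <= Num.sqrt (\sum_i F i ^+ 2) * Num.sqrt (\sum_i G i ^+ 2).
Proof.
have [F2 G2] := (sum_sqr_ge0 F, sum_sqr_ge0 G).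
set X := Num.sqrt _; set Y := Num.sqrt _; set S := \sum_i _.
have [X0 Y0] := (sqrtr_ge0 (\sum_i F i ^+ 2), sqrtr_ge0 (\sum_i G i ^+ 2)).
have [XY0|XY0] := eqVneq (X * Y) 0.
  suff -> : S = 0 by rewrite XY0.
  move/eqP: XY0; rewrite mulf_eq0 !sqrtr_eq0 !le_eqVlt !ltNge !sum_sqr_ge0 !orbF.
  case/orP=> /eqP/sum_sqr_eq0 Z; rewrite /S big1 // => i _; rewrite Z ?mul0r ?mulr0 //.
(* The expansion of the square [\sum_i (Y F i - X G i)^2 >= 0] is [2 X Y (X Y - S)]. *)
have := sum_sqr_ge0 (fun i => Y * F i - X * G i).
rewrite sum_sqr_combE -(sqr_sqrtr F2) -(sqr_sqrtr G2) -/X -/Y -/S => E.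
have XYp : 0 < X * Y by rewrite lt_def XY0 mulr_ge0.
have : 0 <= X * Y * (X * Y - S) by nra.
by rewrite pmulr_rge0 // subr_ge0.
Qed.

Lemma sqrt_sum_sqrD F G :
  Num.sqrt (\sum_i (F i + G i) ^+ 2) <=
  Num.sqrt (\sum_i F i ^+ 2) + Num.sqrt (\sum_i G i ^+ 2).
Proof.
have E : \sum_i (F i + G i) ^+ 2 =
    \sum_i F i ^+ 2 + \sum_i G i ^+ 2 + 2 * \sum_i F i * G i.
  by rewrite mulr_sumr -!big_split /=; apply: eq_bigr => i _; ring.
have [X0 Y0] := (sqrtr_ge0 (\sum_i F i ^+ 2), sqrtr_ge0 (\sum_i G i ^+ 2)).
rewrite -[leRHS]ger0_norm ?addr_ge0 // -sqrtr_sqr ler_sqrt ?sqr_ge0 // E.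
have := sum_mul_le_sqrt F G.
rewrite -{2}(sqr_sqrtr (sum_sqr_ge0 F)) -{2}(sqr_sqrtr (sum_sqr_ge0 G)).
set X := Num.sqrt _; set Y := Num.sqrt _; nra.
Qed.

Lemma sum_sqr_collinear F G c t t0 :
  \sum_i F i ^+ 2 = (c * t) ^+ 2 -> \sum_i G i ^+ 2 = (c * t0) ^+ 2 ->
  \sum_i (F i - G i) ^+ 2 = (c * (t0 - t)) ^+ 2 ->
  forall i, t0 * F i = t * G i.
Proof.
move=> hF hG hFG i; apply/eqP; rewrite -subr_eq0; apply/eqP; move: i.
apply: sum_sqr_eq0; have := sum_sqr_combE F G 1 1.
under eq_bigr do rewrite !mul1r.
rewrite hFG sum_sqr_combE hF hG => E; nra.
Qed.

Lemma sum_sqr_scale_sub_ge F G s t : 0 <= s -> 0 <= t ->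
  \sum_i G i ^+ 2 = \sum_i F i ^+ 2 ->
  (t - s) ^+ 2 * \sum_i F i ^+ 2 <= \sum_i (s * F i - t * G i) ^+ 2.
Proof.
move=> s0 t0 hG; have := sum_sqr_ge0 (fun i => 1 * F i - 1 * G i).
rewrite !sum_sqr_combE hG => h.
have := mulr_ge0 (mulr_ge0 s0 t0) h; nra.
Qed.

End SumsOfSquares.

Section QTuples.
Variables (R : realType) (Q n : nat).
Local Notation Qp := (Qpt R Q n).
Local Notation perm := {perm 'I_Q}.
Implicit Types (a b c u w : Qp) (v : 'rV[R]_n) (s : perm) (P : {group perm}).

Definition qadd a b : Qp := fun i => a i + b i.
Definition qsub a b : Qp := fun i => a i - b i.
Definition qscale (t : R) a : Qp := fun i => t *: a i.
Definition qcomp a s : Qp := fun i => a (s i).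

Definition vsq (v : 'rV[R]_n) : R := \sum_j v 0 j ^+ 2.

Definition sqn u : R := \sum_(i < Q) vsq (u i).

Lemma vsq_ge0 v : 0 <= vsq v.
Proof. exact: sum_sqr_ge0. Qed.

Lemma vsq_le_sqn u i : vsq (u i) <= sqn u.
Proof. by apply: sum_ge_term => j; apply: vsq_ge0. Qed.

Lemma sqn_pairE u : sqn u = \sum_(p : 'I_Q * 'I_n) u p.1 0 p.2 ^+ 2.
Proof. exact: pair_bigA. Qed.

Lemma sqn_ge0 u : 0 <= sqn u.
Proof. by rewrite sqn_pairE sum_sqr_ge0. Qed.

Lemma sqr_le_sqn u i j : u i 0 j ^+ 2 <= sqn u.
Proof.
apply: le_trans (vsq_le_sqn u i).
by apply: sum_ge_term => k; apply: sqr_ge0.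
Qed.

Lemma qscaleA (r t : R) u : qscale r (qscale t u) = qscale (r * t) u.
Proof. by apply: funext => i; rewrite /qscale scalerA. Qed.

Lemma qadd_qscale0 a u : qadd a (qscale 0 u) = a.
Proof. by apply: funext => i; rewrite /qadd /qscale scale0r addr0. Qed.

Lemma sqn_comp u s : sqn (qcomp u s) = sqn u.
Proof. by rewrite /sqn [RHS](reindex_inj (@perm_inj _ s)). Qed.

Lemma sqn_scale t u : sqn (qscale t u) = t ^+ 2 * sqn u.
Proof.
rewrite /sqn mulr_sumr; apply: eq_bigr => i _; rewrite mulr_sumr.
by apply: eq_bigr => j _; rewrite /qscale mxE exprMn.
Qed.

Lemma sqrt_sqn_scale t u : 0 <= t ->
  Num.sqrt (sqn (qscale t u)) = t * Num.sqrt (sqn u).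
Proof. by move=> t0; rewrite sqn_scale sqrtrM ?sqr_ge0 // sqrtr_sqr ger0_norm. Qed.

Lemma sqn_triangle u w :
  Num.sqrt (sqn (qadd u w)) <= Num.sqrt (sqn u) + Num.sqrt (sqn w).
Proof.
rewrite !sqn_pairE; under eq_bigr do rewrite /qadd mxE.
exact: sqrt_sum_sqrD.
Qed.

Lemma sqn_le_bound u d : (forall i j, `|u i 0 j| <= d) ->
  sqn u <= (Q * n)%:R * d ^+ 2.
Proof.
move=> ud; have -> : (Q * n)%:R * d ^+ 2 = \sum_(p : 'I_Q * 'I_n) d ^+ 2.
  by rewrite sumr_const card_prod !card_ord mulr_natl.
rewrite sqn_pairE; apply: ler_sum => p _; have d0 := le_trans (normr_ge0 _) (ud p.1 p.2).
by rewrite -real_normK ?num_real // ler_sqr ?nnegrE.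
Qed.

Lemma GcostE a b s : Gcost a b s = sqn (qsub a (qcomp b s)).
Proof.
by rewrite /Gcost /sqn; apply: eq_bigr => i _; apply: eq_bigr => j _; rewrite !mxE.
Qed.

Lemma Gcost_ge0 a b s : 0 <= Gcost a b s.
Proof. by rewrite GcostE sqn_ge0. Qed.

Lemma Gcost_sym a b s : Gcost a b s = Gcost b a s^-1.
Proof.
rewrite !GcostE -(sqn_comp _ s^-1) /sqn; apply: eq_bigr => i _.
by apply: eq_bigr => j _; rewrite /qsub /qcomp permKV !mxE; ring.
Qed.

Lemma Gcost_triangle a b c s1 s2 :
  Num.sqrt (Gcost a c (s1 * s2)) <=
  Num.sqrt (Gcost a b s1) + Num.sqrt (Gcost b c s2).
Proof.
rewrite !GcostE -(sqn_comp (qsub b _) s1).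
suff -> : qsub a (qcomp c (s1 * s2)) =
    qadd (qsub a (qcomp b s1)) (qcomp (qsub b (qcomp c s2)) s1).
  exact: sqn_triangle.
by apply: funext => i; rewrite /qadd /qsub /qcomp permM addrA subrK.
Qed.

Lemma Gcost_scale t a b s :
  Gcost (qscale t a) (qscale t b) s = t ^+ 2 * Gcost a b s.
Proof.
rewrite !GcostE -sqn_scale; congr sqn; apply: funext => i.
by rewrite /qsub /qscale /qcomp scalerBr.
Qed.

Definition Gcost_min P a b :=
  \big[Num.min/Gcost a b 1%g]_(s in P) Gcost a b s.

Definition Gdist_on P a b := Num.sqrt (Gcost_min P a b).

Lemma Gdist_onT a b : Gdist a b = Gdist_on [set: perm]%G a b.
Proof. by congr Num.sqrt; apply: eq_bigl => s; rewrite inE. Qed.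

Lemma Gcost_min_attained P a b :
  exists2 s, s \in P & Gcost_min P a b = Gcost a b s.
Proof.
rewrite /Gcost_min; elim/big_ind: _ => //; first by exists 1%g.
- move=> x y [s1 Ps1 ->] [s2 Ps2 ->].
  by rewrite /Order.min; case: ifP => _; [exists s1 | exists s2].
- by move=> s Ps; exists s.
Qed.

Lemma Gcost_min_le P a b s : s \in P -> Gcost_min P a b <= Gcost a b s.
Proof. exact: bigmin_le_cond. Qed.

Lemma Gcost_min_ge0 P a b : 0 <= Gcost_min P a b.
Proof. by have [s _ ->] := Gcost_min_attained P a b; apply: Gcost_ge0. Qed.

Lemma sqr_Gdist_on P a b : Gdist_on P a b ^+ 2 = Gcost_min P a b.
Proof. by rewrite sqr_sqrtr // Gcost_min_ge0. Qed.

Lemma Gdist_on_ge0 P a b : 0 <= Gdist_on P a b.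
Proof. exact: sqrtr_ge0. Qed.

Lemma Gdist_on_le P a b s : s \in P ->
  Gdist_on P a b <= Num.sqrt (Gcost a b s).
Proof. by move=> Ps; rewrite ler_sqrt ?Gcost_ge0 ?Gcost_min_le. Qed.

Lemma Gdist_onC P a b : Gdist_on P a b = Gdist_on P b a.
Proof.
suff le_sym a' b' : Gdist_on P a' b' <= Gdist_on P b' a'.
  by apply/eqP; rewrite eq_le !le_sym.
have [s Ps E] := Gcost_min_attained P b' a'.
by rewrite [leRHS]/Gdist_on E Gcost_sym Gdist_on_le ?groupV.
Qed.

Lemma Gdist_on_triangle P a b c :
  Gdist_on P a c <= Gdist_on P a b + Gdist_on P b c.
Proof.
have [s1 Ps1 E1] := Gcost_min_attained P a b.
have [s2 Ps2 E2] := Gcost_min_attained P b c.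
rewrite /Gdist_on E1 E2; apply: le_trans (Gcost_triangle _ _ _ _ _).
by rewrite Gdist_on_le ?groupM.
Qed.

Lemma Gdist_on_comp0 P a s : s \in P -> Gdist_on P (qcomp a s) a = 0.
Proof.
move=> Ps; apply/eqP; rewrite eq_le Gdist_on_ge0 andbT.
suff <- : Num.sqrt (Gcost (qcomp a s) a s) = 0 by exact: Gdist_on_le.
rewrite /Gcost big1 ?sqrtr0 // => i _; rewrite big1 // => j _.
by rewrite /qcomp subrr expr0n.
Qed.

Lemma Gdist_on_refl P a : Gdist_on P a a = 0.
Proof.
have a1 : qcomp a 1%g = a by apply: funext => i; rewrite /qcomp perm1.
by rewrite -{1}a1 Gdist_on_comp0.
Qed.

Lemma Gdist_on_eq0l P a b c : Gdist_on P a b = 0 ->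
  Gdist_on P a c = Gdist_on P b c.
Proof.
move=> ab0; apply/eqP; rewrite eq_le.
have := Gdist_on_triangle P a b c; have := Gdist_on_triangle P b a c.
by rewrite (Gdist_onC P b a) ab0 !add0r => -> ->.
Qed.

Lemma Gdist_on_eq0r P a b c : Gdist_on P b c = 0 ->
  Gdist_on P a b = Gdist_on P a c.
Proof. by rewrite (Gdist_onC P a b) (Gdist_onC P a c); apply: Gdist_on_eq0l. Qed.

Lemma Gdist_on_scale P t a b : 0 <= t ->
  Gdist_on P (qscale t a) (qscale t b) = t * Gdist_on P a b.
Proof.
move=> t0; rewrite /Gdist_on.
suff -> : Gcost_min P (qscale t a) (qscale t b) = t ^+ 2 * Gcost_min P a b.
  by rewrite sqrtrM ?sqr_ge0 // sqrtr_sqr ger0_norm.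
apply/eqP; rewrite eq_le; apply/andP; split.
  have [s Ps ->] := Gcost_min_attained P a b.
  by rewrite -Gcost_scale Gcost_min_le.
have [s Ps ->] := Gcost_min_attained P (qscale t a) (qscale t b).
by rewrite Gcost_scale ler_wpM2l ?sqr_ge0 // Gcost_min_le.
Qed.

Lemma Gdist_on_ray P u (r t : R) : 0 <= r -> 0 <= t ->
  Gdist_on P (qscale r u) (qscale t u) = `|t - r| * Num.sqrt (sqn u).
Proof.
move=> r0 t0; rewrite -sqrtr_sqr -sqrtrM ?sqr_ge0 //; congr Num.sqrt.
apply/eqP; rewrite eq_le; apply/andP; split.
  apply: le_trans (Gcost_min_le _ _ (group1 P)) _.
  rewrite GcostE -sqrrN opprB -sqn_scale.
  suff -> : qsub (qscale r u) (qcomp (qscale t u) 1) = qscale (r - t) u by [].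
  by apply: funext => i; rewrite /qsub /qcomp /qscale perm1 scalerBl.
have [sg _ ->] := Gcost_min_attained P (qscale r u) (qscale t u).
have usg : sqn (qcomp u sg) = sqn u by rewrite sqn_comp.
rewrite GcostE !sqn_pairE in usg *.
under [X in _ <= X]eq_bigr do rewrite /qsub /qscale /qcomp !mxE.
exact: sum_sqr_scale_sub_ge.
Qed.

Lemma Gdist_refl a : Gdist a a = 0.
Proof. by rewrite Gdist_onT Gdist_on_refl. Qed.

Lemma GdistC a b : Gdist a b = Gdist b a.
Proof. by rewrite !Gdist_onT Gdist_onC. Qed.

Lemma Gdist_eq0l a b c : Gdist a b = 0 -> Gdist a c = Gdist b c.
Proof. by rewrite !Gdist_onT; apply: Gdist_on_eq0l. Qed.

Lemma Gdist_eq0r a b c : Gdist b c = 0 -> Gdist a b = Gdist a c.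
Proof. by rewrite !Gdist_onT; apply: Gdist_on_eq0r. Qed.

Lemma Gdist_comp0 a s : Gdist (qcomp a s) a = 0.
Proof. by rewrite Gdist_onT Gdist_on_comp0 ?inE. Qed.

End QTuples.

Section Geometric.
Variable R : realType.

Lemma invr_pow2_gt0 j : 0 < (2 : R) ^- j.
Proof. by rewrite invr_gt0 exprn_gt0. Qed.

Lemma invr_pow2S j : (2 : R) ^- j.+1 = 2 ^- j / 2.
Proof. by rewrite exprSr invfM. Qed.

Lemma exists_invr_pow2_lt (e : R) : 0 < e -> exists j, 2 ^- j < e.
Proof.
move=> e0; have /archi_boundP : 0 <= e^-1 by rewrite invr_ge0 ltW.
set m := Num.Def.archi_bound _ => em; exists m.
rewrite -[e]invrK ltf_pV2 ?posrE ?invr_gt0 ?exprn_gt0 //.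
by apply: lt_trans em _; rewrite -natrX ltr_nat ltn_expl.
Qed.

Lemma geometric_cauchy_lim (b : nat -> R) :
  (forall p q, (p <= q)%N -> `|b p - b q| <= 2 ^- p) ->
  exists l, forall r, `|b r - l| <= 2 ^- r.
Proof.
move=> bC; pose E := range (fun q => b q - 2 ^- q).
have ubE : ubound E (b 0%N + 1).
  move=> y [q _ <-]; have := invr_pow2_gt0 q.
  by have := bC 0%N q isT; rewrite expr0 invr1 ler_norml => /andP[]; lra.
have neE : E !=set0 by exists (b 0%N - 2 ^- 0); exists 0%N.
exists (sup E) => r.
have low : b r - 2 ^- r <= sup E.
  by apply: ub_le_sup; [exists (b 0%N + 1) | exists r].
have up : sup E <= b r + 2 ^- r.
  apply: ge_sup => // y [q _ <-].
  have := invr_pow2_gt0 q; have := invr_pow2_gt0 r.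
  have [rq|/ltnW qr] := leqP r q.
    by have := bC r q rq; rewrite ler_norml => /andP[]; lra.
  by have := bC q r qr; rewrite ler_norml => /andP[]; lra.
by rewrite ler_norml; apply/andP; split; lra.
Qed.

End Geometric.

Section Completeness.
Variables (R : realType) (Q n : nat) (P : {group {perm 'I_Q}}).
Local Notation Qp := (Qpt R Q n).
Local Notation dP := (Gdist_on P).
Implicit Types (W Z : nat -> Qp) (a b : Qp).

Definition Gcauchy W := forall e : R, 0 < e ->
  exists N, forall p q, (N <= p)%N -> (N <= q)%N -> dP (W p) (W q) < e.

Definition Gcvg W L := forall e : R, 0 < e ->
  exists N, forall m, (N <= m)%N -> dP (W m) L < e.

Lemma Gcauchy_fast_subseq W : Gcauchy W ->
  exists M : nat -> nat, (forall j, M j <= M j.+1)%N /\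
    forall j p q, (M j <= p)%N -> (M j <= q)%N -> dP (W p) (W q) < 2 ^- j.+1.
Proof.
move=> cW; pose N j := projT1 (cid (cW _ (invr_pow2_gt0 R j.+1))).
have NP j : forall p q, (N j <= p)%N -> (N j <= q)%N -> dP (W p) (W q) < 2 ^- j.+1.
  exact: projT2 (cid (cW _ (invr_pow2_gt0 R j.+1))).
exists (fun j => \sum_(i < j.+1) N i)%N; split => [j|j p q jp jq].
  by rewrite [X in (_ <= X)%N]big_ord_recr leq_addr.
have Nj : (N j <= \sum_(i < j.+1) N i)%N by rewrite big_ord_recr leq_addl.
by apply: NP; apply: leq_trans Nj _.
Qed.

Definition opt_perm a b := s2val (cid2 (Gcost_min_attained P a b)).

Lemma opt_permP a b :
  opt_perm a b \in P /\ Gcost_min P a b = Gcost a b (opt_perm a b).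
Proof. by rewrite /opt_perm; case: cid2. Qed.

(* Each term is replaced by a representative optimally matched with the
   previous representative, so that consecutive representatives are close
   coordinatewise. *)
Fixpoint realign Z j : Qp :=
  if j is j'.+1 then qcomp (Z j) (opt_perm (realign Z j') (Z j)) else Z 0%N.

Lemma Gdist_on_realign Z j : dP (realign Z j) (Z j) = 0.
Proof.
by case: j => [|j] /=; rewrite ?Gdist_on_refl ?Gdist_on_comp0 ?(opt_permP _ _).1.
Qed.

Lemma realign_step Z j i l :
  `|realign Z j i 0 l - realign Z j.+1 i 0 l| <= dP (Z j) (Z j.+1).
Proof.
rewrite -(Gdist_on_eq0l _ (Gdist_on_realign Z j)) /Gdist_on (opt_permP _ _).2 GcostE.
rewrite -sqrtr_sqr ler_sqrt ?sqn_ge0 //.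
by apply: le_trans (sqr_le_sqn _ i l); rewrite /qsub !mxE.
Qed.

Lemma realign_cauchy Z : (forall j, dP (Z j) (Z j.+1) <= 2 ^- j.+1) ->
  forall i l p q, (p <= q)%N ->
  `|realign Z p i 0 l - realign Z q i 0 l| <= 2 ^- p.
Proof.
move=> ZC i l p q /subnKC <-; set b := fun j => realign Z j i 0 l.
suff tail d : `|b p - b (p + d)%N| <= 2 ^- p - 2 ^- (p + d).
  by apply: le_trans (tail _) _; rewrite gerDl oppr_le0 ltW ?invr_pow2_gt0.
elim: d => [|d IH]; first by rewrite addn0 !subrr normr0.
have := ler_distD (b (p + d)%N) (b p) (b (p + d).+1).
have := realign_step Z (p + d) i l; have := ZC (p + d)%N.
rewrite addnS invr_pow2S /b; lra.
Qed.

Lemma fast_Gcauchy_cvg Z : (forall j, dP (Z j) (Z j.+1) <= 2 ^- j.+1) ->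
  exists L, forall j, dP (Z j) L <= 2 ^- j * Num.sqrt (Q * n)%:R.
Proof.
move=> ZC; have lims i l := geometric_cauchy_lim (realign_cauchy ZC i l).
pose L : Qp := fun i => \row_l projT1 (cid (lims i l)).
exists L => j; rewrite -(Gdist_on_eq0l _ (Gdist_on_realign Z j)).
apply: le_trans (Gdist_on_le _ _ (group1 P)) _.
have j0 := ltW (invr_pow2_gt0 R j).
rewrite -[X in _ <= X * _]ger0_norm // -sqrtr_sqr -sqrtrM ?sqr_ge0 //.
rewrite ler_sqrt ?mulr_ge0 ?sqr_ge0 // mulrC GcostE; apply: sqn_le_bound => i l.
by rewrite /qsub /qcomp perm1 !mxE; case: cid.
Qed.

Lemma Gdist_on_complete W : Gcauchy W -> exists L, Gcvg W L.
Proof.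
move=> /Gcauchy_fast_subseq [M [Mmono MC]].
have [L ZL] := @fast_Gcauchy_cvg (W \o M) (fun j => ltW (MC j _ _ (leqnn _) (Mmono j))).
exists L => e e0; set K := Num.sqrt (Q * n)%:R in ZL.
have K0 : 0 <= K := sqrtr_ge0 _.
have [j je] := exists_invr_pow2_lt (divr_gt0 e0 (ltr_wpDr K0 ltr01)).
exists (M j) => m jm; apply: le_lt_trans (Gdist_on_triangle _ _ (W (M j)) _) _.
have := MC j m (M j) jm (leqnn _); have := ZL j; rewrite invr_pow2S /=.
have := invr_pow2_gt0 R j; rewrite ltr_pdivlMr ?ltr_wpDr // in je; nra.
Qed.

Lemma Gcauchy_cst a : Gcauchy (fun=> a).
Proof. by move=> e e0; exists 0%N => p q _ _; rewrite Gdist_on_refl. Qed.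

Lemma Gcvg_cst a L : Gcvg (fun=> a) L -> dP a L = 0.
Proof.
move=> aL; apply/eqP; rewrite eq_le Gdist_on_ge0 andbT; apply/ler_addgt0Pr => e e0.
by have [N /(_ N (leqnn N)) /ltW] := aL e e0; rewrite add0r.
Qed.

Definition Glim W : Qp :=
  if pselect (exists L, Gcvg W L) is left h then projT1 (cid h) else W 0%N.

Lemma Gcvg_Glim W : Gcauchy W -> Gcvg W (Glim W).
Proof.
move=> /Gdist_on_complete hW; rewrite /Glim; case: pselect => // h.
exact: projT2 (cid h).
Qed.

Lemma Gcvg_Gdist_on W V L M : Gcvg W L -> Gcvg V M ->
  lim ((fun m => dP (W m) (V m)) @ \oo) = dP L M.
Proof.
move=> WL VM; apply: cvg_lim => //; apply/cvgrPdist_lt => e e0.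
have e2 : 0 < e / 2 by rewrite divr_gt0.
have [[N1 H1] [N2 H2]] := (WL _ e2, VM _ e2).
near=> m; have /H1 h1 : (N1 <= m)%N by near: m; exists N1.
have /H2 h2 : (N2 <= m)%N by near: m; exists N2.
have := Gdist_on_triangle P (W m) L (V m); have := Gdist_on_triangle P L M (V m).
have := Gdist_on_triangle P L (W m) M; have := Gdist_on_triangle P (W m) (V m) M.
rewrite (Gdist_onC P L (W m)) (Gdist_onC P M (V m)) ltr_distlC.
by move=> *; apply/andP; split; lra.
Unshelve. all: by end_near.
Qed.

End Completeness.

Section NearAPoint.
Variables (R : realType) (Q n : nat) (A : Qpt R Q n).
Local Notation Qp := (Qpt R Q n).
Local Notation perm := {perm 'I_Q}.
Implicit Types (u w V : Qp) (s : perm).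

Definition qstab_set := [set s : perm | [forall l, A (s l) == A l]]%SET.

Lemma qstabP s : reflect (forall l, A (s l) = A l) (s \in qstab_set).
Proof. by rewrite inE; apply: (iffP forallP) => h l; apply/eqP. Qed.

Lemma qstab_group_set : group_set qstab_set.
Proof.
apply/group_setP; split; first by apply/qstabP => l; rewrite perm1.
by move=> s t /qstabP hs /qstabP ht; apply/qstabP => l; rewrite permM ht hs.
Qed.

Canonical qstab := group qstab_group_set.

Local Notation dS := (Gdist_on qstab).

(* The default [1] only matters when all points of [A] coincide. *)
Definition gap2 : R :=
  \big[Num.min/1]_(p : 'I_Q * 'I_Q | A p.1 != A p.2) vsq (A p.1 - A p.2).

Lemma gap2_gt0 : 0 < gap2.
Proof.
apply: lt_bigmin => // p Ap; rewrite lt_def vsq_ge0 andbT.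
apply: contra Ap => /eqP /sum_sqr_eq0 A0; apply/eqP/rowP => j.
by have /eqP := A0 j; rewrite !mxE subr_eq0 => /eqP.
Qed.

Lemma gap2_le l l' : A l != A l' -> gap2 <= vsq (A l - A l').
Proof. by move=> Al; apply: (@bigmin_le_cond _ _ _ _ (l, l')). Qed.

Definition near_radius := Num.sqrt gap2 / 8.

Lemma near_radius_gt0 : 0 < near_radius.
Proof. by rewrite divr_gt0 // sqrtr_gt0 gap2_gt0. Qed.

Lemma sqn_lt_gap2 u : Num.sqrt (sqn u) <= near_radius -> sqn u < gap2 / 16.
Proof.
move=> u_near; have g0 := gap2_gt0.
have E : near_radius ^+ 2 = gap2 / 64.
  rewrite expr_div_n sqr_sqrtr ?(ltW g0) //; congr (_ / _).
  by rewrite -natrX.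
have := u_near; rewrite -ler_sqr ?nnegrE ?sqrtr_ge0 ?(ltW near_radius_gt0) //.
rewrite sqr_sqrtr ?sqn_ge0 // E; lra.
Qed.

Lemma near_scale u t : 0 <= t ->
  t <= near_radius / (Num.sqrt (sqn u) + 1) ->
  Num.sqrt (sqn (qscale t u)) <= near_radius.
Proof.
have c0 := sqrtr_ge0 (sqn u).
by move=> t0; rewrite sqrt_sqn_scale // ler_pdivlMr ?ltr_wpDl //; nra.
Qed.

Lemma Gcost_qadd_qstab u w s : s \in qstab ->
  Gcost (qadd A u) (qadd A w) s = Gcost u w s.
Proof.
move=> /qstabP As; apply: eq_bigr => i _; apply: eq_bigr => j _.
by rewrite /qadd !mxE As; congr (_ ^+ 2); ring.
Qed.

Lemma Gcost_qadd1_le u w :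
  Gcost (qadd A u) (qadd A w) 1 <= 2 * sqn u + 2 * sqn w.
Proof.
rewrite /sqn !mulr_sumr -big_split; apply: ler_sum => i _ /=.
rewrite perm1 (eq_bigr (fun j => (u i 0 j - w i 0 j) ^+ 2)) ?sum_sqrB_le //.
by move=> j _; rewrite /qadd !mxE; congr (_ ^+ 2); ring.
Qed.

Lemma Gcost_qadd_gap u w s l : A l != A (s l) ->
  gap2 / 2 - 2 * sqn u - 2 * sqn w <= Gcost (qadd A u) (qadd A w) s.
Proof.
move=> Asl; have := gap2_le Asl.
have := vsq_le_sqn u l; have := vsq_le_sqn w (s l).
have : \sum_j (qadd A u l 0 j - qadd A w (s l) 0 j) ^+ 2 <= Gcost (qadd A u) (qadd A w) s.
  by apply: (@sum_ge_term _ _ (fun i => \sum_j _)) => i; apply: sum_sqr_ge0.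
have := sum_sqrDB_ge (fun j => (A l - A (s l)) 0 j) (fun j => u l 0 j) (fun j => w (s l) 0 j).
have -> : \sum_j ((A l - A (s l)) 0 j + (u l 0 j - w (s l) 0 j)) ^+ 2 =
    \sum_j (qadd A u l 0 j - qadd A w (s l) 0 j) ^+ 2.
  by apply: eq_bigr => j _; rewrite /qadd !mxE; congr (_ ^+ 2); ring.
rewrite /vsq; lra.
Qed.

Lemma qstab_of_good_perm u w s :
  Num.sqrt (sqn u) <= near_radius -> Num.sqrt (sqn w) <= near_radius ->
  Gcost (qadd A u) (qadd A w) s <= Gcost (qadd A u) (qadd A w) 1 -> s \in qstab.
Proof.
move=> /sqn_lt_gap2 hu /sqn_lt_gap2 hw hs; apply/qstabP => l.
apply/eqP; apply: contraT; rewrite eq_sym => /(Gcost_qadd_gap u w) hgap.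
have := Gcost_qadd1_le u w; have := gap2_gt0; lra.
Qed.

Lemma Gdist_near u w :
  Num.sqrt (sqn u) <= near_radius -> Num.sqrt (sqn w) <= near_radius ->
  Gdist (qadd A u) (qadd A w) = dS u w.
Proof.
move=> hu hw; rewrite Gdist_onT; congr Num.sqrt; apply/eqP; rewrite eq_le.
have [s0 _ E0] := Gcost_min_attained [set: perm]%G (qadd A u) (qadd A w).
have s0A : s0 \in qstab.
  by apply: qstab_of_good_perm hu hw _; rewrite -E0 Gcost_min_le ?inE.
have [s1 s1A E1] := Gcost_min_attained qstab u w.
rewrite E1 -(Gcost_qadd_qstab u w s1A) Gcost_min_le ?inE //=.
by rewrite E0 !Gcost_qadd_qstab // -E1 Gcost_min_le.
Qed.

Lemma Gdist_repr (B : Qp) :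
  exists2 u, sqn u = Gdist A B ^+ 2 & Gdist (qadd A u) B = 0.
Proof.
have [s _ E] := Gcost_min_attained [set: perm]%G A B.
exists (fun i => B (s i) - A i).
  rewrite Gdist_onT sqr_Gdist_on E GcostE /sqn; apply: eq_bigr => i _.
  by apply: eq_bigr => j _; rewrite /qsub /qcomp !mxE -sqrrN opprB.
have -> : qadd A (fun i => B (s i) - A i) = qcomp B s.
  by apply: funext => i; rewrite /qadd addrC subrK.
exact: Gdist_comp0.
Qed.

(* Equality in the triangle inequality for [0, u, w] forces [u] to lie on the
   segment [0, w], up to a permutation fixing [A]. *)
Lemma Gdist_near_collinear u w c t t0 : t0 != 0 ->
  Num.sqrt (sqn u) <= near_radius -> Num.sqrt (sqn w) <= near_radius ->
  sqn u = (c * t) ^+ 2 -> sqn w = (c * t0) ^+ 2 ->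
  Gdist (qadd A u) (qadd A w) = c * (t0 - t) ->
  Gdist (qadd A u) (qadd A (qscale (t / t0) w)) = 0.
Proof.
move=> t00 hu hw hsu hsw huw; rewrite Gdist_near // in huw.
have [sg sgA E] := Gcost_min_attained qstab u w.
have col : forall p : 'I_Q * 'I_n, t0 * u p.1 0 p.2 = t * w (sg p.1) 0 p.2.
  apply: sum_sqr_collinear; rewrite -?sqn_pairE ?hsu //.
    by rewrite -hsw -(sqn_comp w sg) sqn_pairE.
  rewrite -huw sqr_Gdist_on E GcostE sqn_pairE.
  by apply: eq_bigr => p _; rewrite /qsub /qcomp !mxE.
have -> : qadd A u = qcomp (qadd A (qscale (t / t0) w)) sg.
  apply: funext => i; apply/rowP => j; move/qstabP: sgA => /(_ i) sgA.
  rewrite /qadd /qcomp /qscale !mxE sgA mulrAC -(col (i, j)) mulrAC mulfV ?mul1r //.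
exact: Gdist_comp0.
Qed.

End NearAPoint.

Section Geodesics.
Variables (R : realType) (Q n : nat) (A : Qpt R Q n).
Local Notation Qp := (Qpt R Q n).
Local Notation dS := (Gdist_on (qstab A)).
Implicit Types (g : geodesic A) (V : Qp).

Lemma near_ray V :
  \forall t \near 0^'+, Num.sqrt (sqn (qscale t V)) <= near_radius A.
Proof.
have tau0 : 0 < near_radius A / (Num.sqrt (sqn V) + 1).
  by rewrite divr_gt0 ?near_radius_gt0 ?ltr_wpDl ?sqrtr_ge0.
near=> t; apply: near_scale; near: t; first exact: nbhs_right_ge.
exact: nbhs_right_le.
Unshelve. all: by end_near.
Qed.

Lemma geodesic_ray g :
  exists V, \forall t \near 0^'+, Gdist (gcurve g t) (qadd A (qscale t V)) = 0.
Proof.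
case: g => T gam T0 gam0 [c [c0 gsp]] /=.
have gA t : 0 <= t <= T -> Gdist A (gam t) = c * t.
  move=> /andP[t0 tT]; rewrite GdistC -(Gdist_eq0r _ gam0) gsp ?lexx ?t0 ?(ltW T0) //.
  by rewrite sub0r normrN ger0_norm.
have r0 := near_radius_gt0 A.
pose t0 := Num.min T (near_radius A / (c + 1)).
have t0_gt0 : 0 < t0 by rewrite lt_min T0 divr_gt0 ?ltr_wpDl.
have t0T : t0 <= T by rewrite ge_min lexx.
have ct0 : c * t0 <= near_radius A.
  have : t0 <= near_radius A / (c + 1) by rewrite ge_min lexx orbT.
  by rewrite ler_pdivlMr ?ltr_wpDl //; nra.
have [w hw hw0] := Gdist_repr A (gam t0).
exists (qscale t0^-1 w); near=> t.
have t_gt0 : 0 < t by near: t; exact: nbhs_right_gt.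
have tt0 : t <= t0 by near: t; exact: nbhs_right_le.
have [u hu hu0] := Gdist_repr A (gam t).
have tT : 0 <= t <= T by rewrite ltW //= (le_trans tt0).
have t0T' : 0 <= t0 <= T by rewrite ltW.
rewrite gA // in hu; rewrite gA // in hw.
rewrite -(Gdist_eq0l _ hu0) qscaleA.
apply: (Gdist_near_collinear (lt0r_neq0 t0_gt0) _ _ hu hw).
- by rewrite hu sqrtr_sqr ger0_norm ?mulr_ge0 ?(ltW t_gt0) //; apply: le_trans ct0; nra.
- by rewrite hw sqrtr_sqr ger0_norm ?mulr_ge0 ?(ltW t0_gt0).
rewrite (Gdist_eq0l _ hu0) GdistC (Gdist_eq0l _ hw0) gsp //.
by rewrite distrC ger0_norm ?subr_ge0.
Unshelve. all: by end_near.
Qed.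

Definition dir g : Qp := projT1 (cid (geodesic_ray g)).

Lemma dirP g :
  \forall t \near 0^'+, Gdist (gcurve g t) (qadd A (qscale t (dir g))) = 0.
Proof. exact: projT2 (cid (geodesic_ray g)). Qed.

Lemma dA_dir g1 g2 : dA g1 g2 = dS (dir g1) (dir g2).
Proof.
apply: cvg_lim => //; apply: cvg_near_cst; near=> t.
have t_gt0 : 0 < t by near: t; exact: nbhs_right_gt.
have e1 : Gdist (gcurve g1 t) (qadd A (qscale t (dir g1))) = 0.
  by near: t; exact: dirP.
have e2 : Gdist (gcurve g2 t) (qadd A (qscale t (dir g2))) = 0.
  by near: t; exact: dirP.
rewrite (Gdist_eq0l _ e1) GdistC (Gdist_eq0l _ e2) GdistC Gdist_near; first last.
- by near: t; exact: near_ray.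
- by near: t; exact: near_ray.
by rewrite Gdist_on_scale ?(ltW t_gt0) // mulrC mulKf ?gt_eqF.
Unshelve. all: by end_near.
Qed.

Lemma dA_cauchyE (s : nat -> geodesic A) :
  dA_cauchy s <-> Gcauchy (qstab A) (fun m => dir (s m)).
Proof.
split=> sC e /sC [N sN]; exists N => p q Np Nq; last by rewrite dA_dir sN.
by rewrite -dA_dir sN.
Qed.

Lemma ray_geodesic V : exists g, dS (dir g) V = 0.
Proof.
set c := Num.sqrt (sqn V); have c0 : 0 <= c := sqrtr_ge0 _.
set T := near_radius A / (c + 1).
have T0 : 0 < T by rewrite divr_gt0 ?near_radius_gt0 ?ltr_wpDl.
have near_seg t : 0 <= t <= T -> Num.sqrt (sqn (qscale t V)) <= near_radius A.
  by case/andP; apply: near_scale.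
have gam0 : Gdist (qadd A (qscale 0 V)) A = 0 by rewrite qadd_qscale0 Gdist_refl.
have speed : exists c' : R, 0 <= c' /\ forall s t, 0 <= s <= T -> 0 <= t <= T ->
    Gdist (qadd A (qscale s V)) (qadd A (qscale t V)) = c' * `|t - s|.
  exists c; split => // s t sT tT.
  rewrite Gdist_near ?near_seg // Gdist_on_ray 1?mulrC //.
  - by case/andP: sT.
  - by case/andP: tT.
pose g := Geodesic T0 gam0 speed; exists g.
have [t [t_gt0 nV ng /eqP]] : exists t, [/\ 0 < t,
    Num.sqrt (sqn (qscale t V)) <= near_radius A,
    Num.sqrt (sqn (qscale t (dir g))) <= near_radius A &
    Gdist (qadd A (qscale t V)) (qadd A (qscale t (dir g))) = 0].
  apply: (@filter_ex _ (0 : R)^'+); near=> t.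
  by split; near: t; [exact: nbhs_right_gt | exact: near_ray | exact: near_ray | exact: (dirP g)].
rewrite Gdist_near // Gdist_on_scale ?(ltW t_gt0) // mulf_eq0 gt_eqF //= Gdist_onC.
by move/eqP.
Unshelve. all: by end_near.
Qed.

End Geodesics.

Section Clusters.
Variables (R : realType) (Q n J : nat) (A : Qpt R Q n).
Variables (k : 'I_J -> nat) (x : 'I_J -> 'rV[R]_n).
Hypotheses (x_inj : injective x) (k_gt0 : forall i, (0 < k i)%N)
  (A_cover : forall l, exists i, A l = x i)
  (A_card : forall i, #|[set l : 'I_Q | A l == x i]| = k i).
Local Notation Qp := (Qpt R Q n).
Implicit Types (u w : Qp) (s : {perm 'I_Q}) (i : 'I_J) (l : 'I_Q).

Definition cluster l : 'I_J := projT1 (cid (A_cover l)).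

Lemma clusterP l : A l = x (cluster l).
Proof. exact: projT2 (cid (A_cover l)). Qed.

Definition cluster_set i := [set l | A l == x i]%SET.

Lemma card_cluster i : #|cluster_set i| = k i.
Proof.
rewrite -A_card; apply: eq_card => l; rewrite !inE.
by apply/idP/idP => [/mem_set //|/set_mem].
Qed.

Definition member i (j : 'I_(k i)) : 'I_Q :=
  enum_val (cast_ord (esym (card_cluster i)) j).
Arguments member : clear implicits.

Lemma member_in i j : member i j \in cluster_set i.
Proof. exact: enum_valP. Qed.

Lemma A_member i j : A (member i j) = x i.
Proof. by apply/eqP; have := member_in j; rewrite inE. Qed.

Lemma cluster_member i j : cluster (member i j) = i.
Proof. by apply: x_inj; rewrite -clusterP A_member. Qed.

Lemma member_inj i : injective (member i).
Proof. by move=> j1 j2 /enum_val_inj /cast_ord_inj. Qed.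

Definition rank i l : 'I_(k i) :=
  cast_ord (card_cluster i) (enum_rank_in (member_in (Ordinal (k_gt0 i))) l).

Lemma member_rank i l : cluster l = i -> member i (rank i l) = l.
Proof.
move=> <-; rewrite /member /rank cast_ordK enum_rankK_in //.
by rewrite inE clusterP.
Qed.

Lemma rank_member i j : rank i (member i j) = j.
Proof. by apply: member_inj; rewrite member_rank ?cluster_member. Qed.

Lemma sum_by_cluster (F : 'I_Q -> R) :
  \sum_l F l = \sum_i \sum_(j < k i) F (member i j).
Proof.
rewrite (partition_big cluster xpredT) //=; apply: eq_bigr => i _.
rewrite (reindex_onto (member i) (rank i)) /=; last by move=> l /eqP; apply: member_rank.
by apply: eq_bigl => j; rewrite cluster_member rank_member !eqxx.
Qed.

Definition to_prod u : prodQ R n k := fun i j => u (member i j).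
Arguments to_prod : clear implicits.

Definition of_prod (y : prodQ R n k) : Qp := fun l => y (cluster l) (rank _ l).

Lemma to_prod_of_prod y : to_prod (of_prod y) = y.
Proof.
apply: functional_extensionality_dep => i; apply: funext => j.
have of_prodE l : cluster l = i -> of_prod y l = y i (rank i l) by move=> <-.
by rewrite /to_prod of_prodE ?cluster_member // rank_member.
Qed.

Lemma cluster_qstab s l : s \in qstab A -> cluster (s l) = cluster l.
Proof. by move=> /qstabP sA; apply: x_inj; rewrite -!clusterP sA. Qed.

Lemma Gcost_by_cluster u w s (sigma : forall i, {perm 'I_(k i)}) :
  (forall i j, s (member i j) = member i (sigma i j)) ->
  Gcost u w s = \sum_i Gcost (to_prod u i) (to_prod w i) (sigma i).
Proof.
move=> sE; rewrite /Gcost (sum_by_cluster (fun l => \sum_j _)).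
by apply: eq_bigr => i _; apply: eq_bigr => j _; rewrite sE.
Qed.

Section RestrictGlue.
Variables (s : {perm 'I_Q}) (sA : s \in qstab A).

Lemma cluster_restrict_inj i : injective (fun j => rank i (s (member i j))).
Proof.
move=> j1 j2 /(congr1 (member i)).
by rewrite !member_rank ?cluster_qstab ?cluster_member // => /perm_inj /member_inj.
Qed.

Definition cluster_restrict i : {perm 'I_(k i)} := perm (cluster_restrict_inj (i := i)).

Lemma cluster_restrictE i j : s (member i j) = member i (cluster_restrict i j).
Proof. by rewrite permE member_rank ?cluster_qstab ?cluster_member. Qed.

End RestrictGlue.

Section Glue.
Variable tau : forall i, {perm 'I_(k i)}.

Definition cluster_glue_fun l := member (cluster l) (tau (cluster l) (rank _ l)).

Lemma cluster_glue_inj : injective cluster_glue_fun.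
Proof.
move=> l1 l2 eq12.
have c12 : cluster l1 = cluster l2.
  by have := congr1 cluster eq12; rewrite /cluster_glue_fun !cluster_member.
move: eq12; rewrite /cluster_glue_fun -c12 => /member_inj /perm_inj.
by move/(congr1 (member (cluster l1))); rewrite !member_rank.
Qed.

Definition cluster_glue : {perm 'I_Q} := perm cluster_glue_inj.

Lemma cluster_glue_qstab : cluster_glue \in qstab A.
Proof. by apply/qstabP => l; rewrite permE /cluster_glue_fun A_member clusterP. Qed.

Lemma cluster_glueE i j : cluster_glue (member i j) = member i (tau i j).
Proof.
rewrite permE /cluster_glue_fun.
have cluster_glueE' l : cluster l = i -> cluster_glue_fun l = member i (tau i (rank i l)) by move=> <-.
by rewrite -/(cluster_glue_fun _) cluster_glueE' ?cluster_member // rank_member.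
Qed.

End Glue.

Lemma prod_dist_to_prod u w : prod_dist (to_prod u) (to_prod w) = Gdist_on (qstab A) u w.
Proof.
rewrite /prod_dist /Gdist_on; congr Num.sqrt; apply/eqP; rewrite eq_le.
apply/andP; split.
  have [s sA ->] := Gcost_min_attained (qstab A) u w.
  rewrite (Gcost_by_cluster u w (cluster_restrictE sA)); apply: ler_sum => i _.
  by rewrite Gdist_onT sqr_Gdist_on Gcost_min_le ?inE.
pose opt i := cid2 (Gcost_min_attained [set: {perm 'I_(k i)}]%G (to_prod u i) (to_prod w i)).
pose tau i := s2val (opt i).
have tauE i : Gdist (to_prod u i) (to_prod w i) ^+ 2 = Gcost (to_prod u i) (to_prod w i) (tau i).
  by rewrite Gdist_onT sqr_Gdist_on /tau; case: (opt i).
rewrite (eq_bigr _ (fun i _ => tauE i)) -(Gcost_by_cluster u w (cluster_glueE tau)).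
exact: Gcost_min_le (cluster_glue_qstab tau).
Qed.

End Clusters.

Theorem theorem3p7 (R : realType) (Q n : nat) (A : Qpt R Q n)
    (J : nat) (k : 'I_J -> nat) :
  is_signature A k ->
  exists f : (nat -> geodesic A) -> prodQ R n k,
    (forall s t : nat -> geodesic A, dA_cauchy s -> dA_cauchy t ->
        prod_dist (f s) (f t) = lim ((fun m => dA (s m) (t m)) @ \oo)) /\
    (forall y : prodQ R n k, exists s : nat -> geodesic A,
        dA_cauchy s /\ prod_dist (f s) y = 0).
Proof.
move=> [x [x_inj k_gt0 _ A_cover A_card]].
pose tan (s : nat -> geodesic A) := Glim (qstab A) (fun m => dir (s m)).
have tan_cvg s : dA_cauchy s -> Gcvg (qstab A) (fun m => dir (s m)) (tan s).
  by move=> /dA_cauchyE /Gcvg_Glim.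
have to_prodD := prod_dist_to_prod x_inj k_gt0 A_cover A_card.
exists (fun s => to_prod A_card (tan s)); split => [s t sC tC | y].
  rewrite to_prodD -(Gcvg_Gdist_on (tan_cvg s sC) (tan_cvg t tC)).
  by congr (lim (_ @ \oo)); apply: funext => m; rewrite dA_dir.
have [g gy] := ray_geodesic A (of_prod k_gt0 A_cover A_card y).
have gC : dA_cauchy (fun=> g) by apply/dA_cauchyE/Gcauchy_cst.
exists (fun=> g); split => //.
rewrite -(to_prod_of_prod x_inj k_gt0 A_cover A_card y) to_prodD.
by rewrite -(Gdist_on_eq0l _ (Gcvg_cst (tan_cvg _ gC))).
Qed.
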